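(* Let $\mathcal{R}_0>0$ and let $\kappa:[0,1]\to[0,\infty)$ be a non-decreasing function with $\kappa(0)=0$. Consider the initial value problem \[ \frac{ds}{d\tau}=-\mathcal{R}_0\frac{1}{1+\kappa(i)}\,s\,i,\qquad \frac{di}{d\tau}=\Big(\mathcal{R}_0\frac{1}{1+\kappa(i)}\,s-1\Big)i, \] with initial conditions $s(0)=s_0\ge 0$, $i(0)=i_0>0$, $s_0+i_0=1$ (initial recovered fraction $r_0=0$), satisfying $s_0\mathcal{R}_0>1+\kappa(i_0)$, with non-negative solution $(s(\tau),i(\tau))$ converging to a disease-free equilibrium $(\bar s,0)$. Let $(s^0(\tau),i^0(\tau))$ be the solution of the same initial value problem with $\kappa\equiv0$ (the classical SIR model $ds/d\tau=-\mathcal{R}_0 s i$, $di/d\tau=(\mathcal{R}_0 s-1)i$), converging to the equilibrium $(\bar s^0,0)$. Then $\bar s\ge \bar s^0$.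
   Context: This is the non-dimensional ''feedback SIR'' (fSIR) model: $s$ and $i$ are the fractions of susceptible and infected individuals, $r=1-s-i$ the recovered fraction, $\tau$ is rescaled time, $\mathcal{R}_0$ the basic reproduction number, and $\kappa(i)$ the ''mitigation function'' with $\mathcal{R}(i)=\mathcal{R}_0/(1+\kappa(i))$. The equilibrium susceptible fraction is $\bar s=\lim_{\tau\to\infty}s(\tau)$. *)

From Stdlib Require Import Reals.
From Coquelicot Require Import Coquelicot.
Open Scope R_scope.

Definition is_fSIR_solution (R0 : R) (kappa : R -> R) (s i : R -> R) : Prop :=
  (forall t, 0 < t ->
     is_derive s t (- (R0 / (1 + kappa (i t))) * s t * i t) /\
     is_derive i t ((R0 / (1 + kappa (i t)) * s t - 1) * i t)) /\
  filterlim s (at_right 0) (locally (s 0)) /\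
  filterlim i (at_right 0) (locally (i 0)).

From Stdlib Require Import Reals Lra Psatz.
From Coquelicot Require Import Coquelicot.
Open Scope R_scope.

(* Along a solution, F = s exp(-R0 (s + i)) has derivative
   exp(-R0 (s + i)) s i (R0 - R0 / (1 + kappa(i))): it is a first integral of the
   classical model and is nondecreasing under feedback.  Writing h(x) = F(x, 0), this
   gives h(sbar) >= F(s0, i0) = h(sbar0).  The classical final size lies below the
   threshold, R0 sbar0 <= 1: otherwise i^2 would eventually be nondecreasing, although
   i never vanishes (i^2 e^(2t) is nondecreasing) and tends to 0.  Since h is strictly
   increasing on (-oo, 1/R0], sbar >= sbar0. *)

Lemma nondecreasing_of_derive_nonneg (f df : R -> R) (a : R) :
  (forall t, a < t -> is_derive f t (df t)) -> (forall t, a < t -> 0 <= df t) ->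
  forall x y, a < x -> x <= y -> f x <= f y.
Proof.
  intros Hf Hdf x y Hx Hxy.
  destruct (Req_dec x y) as [<-|Hne]; [lra|].
  destruct (MVT_cor2 f df x y) as [c [Hc [Hxc Hcy]]]; [lra| |].
  - intros c Hc. apply is_derive_Reals, Hf. lra.
  - assert (0 <= df c) by (apply Hdf; lra). nra.
Qed.

Lemma at_right_lim_le_of_nondecreasing (f : R -> R) (a l : R) :
  (forall x y, a < x -> x <= y -> f x <= f y) ->
  filterlim f (at_right a) (locally l) -> forall t, a < t -> l <= f t.
Proof.
  intros Hf Hl t Ht.
  apply (filterlim_le (F := at_right a) f (fun _ => f t) l (f t)); auto.
  - exists (mkposreal (t - a) ltac:(lra)). intros x Hx Hax.
    apply Hf; auto. apply Rabs_def2 in Hx. unfold minus, plus, opp in Hx; simpl in Hx. lra.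
  - apply filterlim_const.
Qed.

Lemma le_lim_of_nondecreasing (f : R -> R) (a l : R) :
  (forall x y, a < x -> x <= y -> f x <= f y) ->
  is_lim f p_infty l -> forall t, a < t -> f t <= l.
Proof.
  intros Hf Hl t Ht.
  apply (is_lim_le_loc (fun _ => f t) f p_infty (f t) l); auto.
  - exists t. intros x Hx. apply Hf; lra.
  - apply is_lim_const.
Qed.

Lemma at_right_lim_le_lim_of_derive_nonneg (f df : R -> R) (a l m : R) :
  (forall t, a < t -> is_derive f t (df t)) -> (forall t, a < t -> 0 <= df t) ->
  filterlim f (at_right a) (locally l) -> is_lim f p_infty m -> l <= m.
Proof.
  intros Hf Hdf Hl Hm.
  pose proof (nondecreasing_of_derive_nonneg f df a Hf Hdf) as Hmono.
  apply (Rle_trans _ (f (a + 1))).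
  - apply (at_right_lim_le_of_nondecreasing f a); auto; lra.
  - apply (le_lim_of_nondecreasing f a); auto; lra.
Qed.

Lemma filterlim_opp_comp {T : Type} (F : (T -> Prop) -> Prop) (f : T -> R) (l : R) :
  filterlim f F (locally l) -> filterlim (fun t => - f t) F (locally (- l)).
Proof. intros Hl. exact (filterlim_comp _ _ _ f Ropp _ _ _ Hl (filterlim_opp l)). Qed.

Lemma eq_at_right_lim_of_derive_zero (f : R -> R) (a l : R) :
  (forall t, a < t -> is_derive f t 0) -> filterlim f (at_right a) (locally l) ->
  forall t, a < t -> f t = l.
Proof.
  intros Hf Hl t Ht. apply Rle_antisym.
  - enough (- l <= - f t) by lra.
    apply (at_right_lim_le_of_nondecreasing (fun t => - f t) a); auto.
    + apply (nondecreasing_of_derive_nonneg _ (fun _ => - 0)); [|intros; lra].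
      intros u Hu. apply (is_derive_opp f), Hf, Hu.
    + now apply filterlim_opp_comp.
  - apply (at_right_lim_le_of_nondecreasing f a); auto.
    apply (nondecreasing_of_derive_nonneg _ (fun _ => 0)); auto with real.
Qed.

Lemma at_right_lim_eq_lim_of_derive_zero (f : R -> R) (a l m : R) :
  (forall t, a < t -> is_derive f t 0) ->
  filterlim f (at_right a) (locally l) -> is_lim f p_infty m -> l = m.
Proof.
  intros Hf Hl Hm. apply Rle_antisym.
  - apply (at_right_lim_le_lim_of_derive_nonneg f (fun _ => 0) a); auto with real.
  - apply Ropp_le_cancel.
    apply (at_right_lim_le_lim_of_derive_nonneg (fun t => - f t) (fun _ => - 0) a).
    + intros t Ht. apply (is_derive_opp f), Hf, Ht.
    + intros; lra.
    + now apply filterlim_opp_comp.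
    + exact (is_lim_opp f p_infty m Hm).
Qed.

Lemma sqr_exp_nondecreasing (y a : R -> R) (c t0 : R) :
  (forall t, t0 < t -> is_derive y t (a t * y t)) -> (forall t, t0 < t -> - c <= a t) ->
  forall u v, t0 < u -> u <= v -> y u ^ 2 * exp (2 * c * u) <= y v ^ 2 * exp (2 * c * v).
Proof.
  intros Hy Ha.
  apply (nondecreasing_of_derive_nonneg _ (fun t => 2 * (a t + c) * y t ^ 2 * exp (2 * c * t))).
  - intros t Ht. evar_last.
    + apply (is_derive_mult (fun t => y t ^ 2)); [| |exact Rmult_comm].
      * apply (is_derive_pow y 2 t _ (Hy t Ht)).
      * apply (is_derive_comp exp (fun t => 2 * c * t)); [apply is_derive_exp|].
        auto_derive; [exact I|reflexivity].
    + unfold plus, mult, scal; simpl. unfold mult; simpl. ring.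
  - intros t Ht. specialize (Ha t Ht).
    pose proof (exp_pos (2 * c * t)). pose proof (pow2_ge_0 (y t)).
    apply Rmult_le_pos; [|lra]. apply Rmult_le_pos; lra.
Qed.

Definition sir_invariant (R0 s i : R) : R := s * exp (- R0 * (s + i)).

Lemma is_derive_sir_invariant (R0 : R) (s i : R -> R) (t ds di : R) :
  is_derive s t ds -> is_derive i t di ->
  is_derive (fun t => sir_invariant R0 (s t) (i t)) t
    (exp (- R0 * (s t + i t)) * (ds * (1 - R0 * s t) - R0 * s t * di)).
Proof.
  intros Hs Hi. unfold sir_invariant. evar_last.
  - apply (is_derive_mult s); [exact Hs| |exact Rmult_comm].
    apply (is_derive_comp exp); [apply is_derive_exp|].
    exact (is_derive_scal (fun t => s t + i t) t (- R0) _ (is_derive_plus s i t ds di Hs Hi)).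
  - unfold plus, mult, scal; simpl. unfold mult; simpl. ring.
Qed.

Lemma filterlim_sir_invariant {T : Type} (F : (T -> Prop) -> Prop) {FF : Filter F}
    (R0 : R) (s i : T -> R) (s1 i1 : R) :
  filterlim s F (locally s1) -> filterlim i F (locally i1) ->
  filterlim (fun t => sir_invariant R0 (s t) (i t)) F (locally (sir_invariant R0 s1 i1)).
Proof.
  intros Hs Hi. unfold sir_invariant.
  assert (Hsum : filterlim (fun t => s t + i t) F (locally (s1 + i1)))
    by exact (filterlim_comp_2 s i Rplus Hs Hi (filterlim_plus s1 i1)).
  assert (Hexp : filterlim (fun t => exp (- R0 * (s t + i t))) F
                   (locally (exp (- R0 * (s1 + i1))))).
  { apply (filterlim_comp _ _ _ _ (fun x => exp (- R0 * x)) _ _ _ Hsum).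
    apply (ex_derive_continuous (fun x => exp (- R0 * x))). auto_derive. exact I. }
  exact (filterlim_comp_2 s _ Rmult Hs Hexp (filterlim_mult s1 _)).
Qed.

Lemma sir_invariant_lt (R0 x y : R) :
  0 < R0 -> x < y -> R0 * y <= 1 -> sir_invariant R0 x 0 < sir_invariant R0 y 0.
Proof.
  intros HR0 Hxy Hy. unfold sir_invariant. rewrite !Rplus_0_r.
  destruct (MVT_cor2 (fun x => x * exp (- R0 * x)) (fun c => exp (- R0 * c) * (1 - R0 * c)) x y Hxy)
    as [c [Heq [Hxc Hcy]]].
  - intros c _. apply is_derive_Reals. auto_derive; [exact I|ring].
  - pose proof (exp_pos (- R0 * c)).
    assert (0 < 1 - R0 * c) by nra.
    assert (0 < exp (- R0 * c) * (1 - R0 * c) * (y - x))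
      by (apply Rmult_lt_0_compat; [apply Rmult_lt_0_compat|]; lra).
    lra.
Qed.

Lemma is_derive_fSIR_invariant (R0 : R) (kappa : R -> R) (s i : R -> R) (t : R) :
  is_fSIR_solution R0 kappa s i -> 0 < t ->
  is_derive (fun t => sir_invariant R0 (s t) (i t)) t
    (exp (- R0 * (s t + i t)) * s t * i t * (R0 - R0 / (1 + kappa (i t)))).
Proof.
  intros [Hsol _] Ht. destruct (Hsol t Ht) as [Hs Hi].
  evar_last; [exact (is_derive_sir_invariant R0 s i t _ _ Hs Hi)|ring].
Qed.

Lemma fSIR_sum_le_initial (R0 : R) (kappa : R -> R) (s i : R -> R) :
  is_fSIR_solution R0 kappa s i -> (forall t, 0 < t -> 0 <= i t) ->
  forall t, 0 < t -> s t + i t <= s 0 + i 0.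
Proof.
  intros Hsol Hi t Ht. destruct Hsol as [Hd [Hs0 Hi0]].
  enough (- (s 0 + i 0) <= - (s t + i t)) by lra.
  apply (at_right_lim_le_of_nondecreasing (fun t => - (s t + i t)) 0); auto.
  - apply (nondecreasing_of_derive_nonneg _ i); [|exact Hi].
    intros u Hu. destruct (Hd u Hu) as [Ds Di]. evar_last.
    + exact (is_derive_opp _ u _ (is_derive_plus s i u _ _ Ds Di)).
    + unfold opp, plus; simpl. ring.
  - apply filterlim_opp_comp.
    exact (filterlim_comp_2 s i Rplus Hs0 Hi0 (filterlim_plus _ _)).
Qed.

Lemma fSIR_invariant_le_final (R0 : R) (kappa : R -> R) (s i : R -> R) (sbar : R) :
  0 <= R0 -> (forall x, 0 <= x -> x <= 1 -> 0 <= kappa x) ->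
  is_fSIR_solution R0 kappa s i -> s 0 + i 0 = 1 ->
  (forall t, 0 < t -> 0 <= s t /\ 0 <= i t) ->
  is_lim s p_infty sbar -> is_lim i p_infty 0 ->
  sir_invariant R0 (s 0) (i 0) <= sir_invariant R0 sbar 0.
Proof.
  intros HR0 Hk Hsol Hsum Hpos Hs Hi.
  pose proof (fSIR_sum_le_initial R0 kappa s i Hsol (fun t Ht => proj2 (Hpos t Ht))) as Hle.
  apply (at_right_lim_le_lim_of_derive_nonneg _ _ 0 _ _
           (fun t Ht => is_derive_fSIR_invariant R0 kappa s i t Hsol Ht)).
  - intros t Ht. destruct (Hpos t Ht) as [Hst Hit].
    assert (Hkt : 0 <= kappa (i t)) by (apply Hk; [|specialize (Hle t Ht)]; lra).
    replace (R0 - R0 / (1 + kappa (i t))) with (R0 * kappa (i t) / (1 + kappa (i t)))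
      by (field; lra).
    pose proof (exp_pos (- R0 * (s t + i t))).
    apply Rmult_le_pos; [apply Rmult_le_pos; [apply Rmult_le_pos|]; lra|].
    apply Rdiv_le_0_compat; nra.
  - destruct Hsol as [_ [Hs0 Hi0]]. exact (filterlim_sir_invariant _ R0 s i _ _ Hs0 Hi0).
  - exact (filterlim_sir_invariant _ R0 s i _ _ Hs Hi).
Qed.

Lemma is_derive_sir_invariant_classical (R0 : R) (s i : R -> R) (t : R) :
  is_fSIR_solution R0 (fun _ => 0) s i -> 0 < t ->
  is_derive (fun t => sir_invariant R0 (s t) (i t)) t 0.
Proof.
  intros Hsol Ht. evar_last; [exact (is_derive_fSIR_invariant R0 _ s i t Hsol Ht)|].
  rewrite Rplus_0_r, Rdiv_1_r. ring.
Qed.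

Lemma sir_invariant_eq_initial (R0 : R) (s i : R -> R) :
  is_fSIR_solution R0 (fun _ => 0) s i ->
  forall t, 0 < t -> sir_invariant R0 (s t) (i t) = sir_invariant R0 (s 0) (i 0).
Proof.
  intros Hsol. apply eq_at_right_lim_of_derive_zero.
  - intros t Ht. exact (is_derive_sir_invariant_classical R0 s i t Hsol Ht).
  - destruct Hsol as [_ [Hs0 Hi0]]. exact (filterlim_sir_invariant _ R0 s i _ _ Hs0 Hi0).
Qed.

Lemma sir_final_invariant (R0 : R) (s i : R -> R) (sbar : R) :
  is_fSIR_solution R0 (fun _ => 0) s i ->
  is_lim s p_infty sbar -> is_lim i p_infty 0 ->
  sir_invariant R0 sbar 0 = sir_invariant R0 (s 0) (i 0).
Proof.
  intros Hsol Hs Hi. symmetry.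
  apply (at_right_lim_eq_lim_of_derive_zero (fun t => sir_invariant R0 (s t) (i t)) 0).
  - intros t Ht. exact (is_derive_sir_invariant_classical R0 s i t Hsol Ht).
  - destruct Hsol as [_ [Hs0 Hi0]]. exact (filterlim_sir_invariant _ R0 s i _ _ Hs0 Hi0).
  - exact (filterlim_sir_invariant _ R0 s i _ _ Hs Hi).
Qed.

Lemma sir_susceptible_pos (R0 : R) (s i : R -> R) :
  is_fSIR_solution R0 (fun _ => 0) s i -> 0 < s 0 ->
  forall t, 0 < t -> 0 < s t.
Proof.
  intros Hsol Hs0 t Ht.
  pose proof (sir_invariant_eq_initial R0 s i Hsol t Ht) as Heq. unfold sir_invariant in Heq.
  pose proof (exp_pos (- R0 * (s t + i t))). pose proof (exp_pos (- R0 * (s 0 + i 0))).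
  nra.
Qed.

Lemma sir_infected_neq0 (R0 : R) (s i : R -> R) :
  0 <= R0 -> is_fSIR_solution R0 (fun _ => 0) s i -> (forall t, 0 < t -> 0 <= s t) ->
  i 0 <> 0 -> forall t, 0 < t -> i t <> 0.
Proof.
  intros HR0 [Hd [_ Hi0]] Hs Hi0_neq t Ht Hit.
  assert (Hrate : forall u, 0 < u -> - (1) <= R0 / (1 + 0) * s u - 1).
  { intros u Hu. specialize (Hs u Hu). rewrite Rplus_0_r, Rdiv_1_r. nra. }
  assert (Hmono := sqr_exp_nondecreasing i (fun t => R0 / (1 + 0) * s t - 1) 1 0
                     (fun t Ht => proj2 (Hd t Ht)) Hrate).
  assert (Hsq : filterlim (fun t => i t ^ 2) (at_right 0) (locally (i 0 ^ 2))).
  { apply (filterlim_comp _ _ _ i (fun x => x ^ 2) _ _ _ Hi0).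
    apply (ex_derive_continuous (fun x => x ^ 2)). auto_derive. exact I. }
  assert (Hexp : filterlim (fun t => exp (2 * 1 * t)) (at_right 0) (locally (exp (2 * 1 * 0)))).
  { apply (filterlim_filter_le_1 _ (@filter_le_within _ (locally 0) _ (fun u => 0 < u))).
    apply (ex_derive_continuous (fun x => exp (2 * 1 * x))). auto_derive. exact I. }
  assert (Hle := at_right_lim_le_of_nondecreasing _ 0 _ Hmono
                   (filterlim_comp_2 _ _ Rmult Hsq Hexp (filterlim_mult _ _)) t Ht).
  cbv beta in Hle. rewrite Hit, Rmult_0_r, exp_0 in Hle.
  pose proof (Rsqr_pos_lt _ Hi0_neq). unfold Rsqr in *. unfold mult in Hle; simpl in Hle. lra.
Qed.

Lemma sir_final_below_threshold (R0 : R) (s i : R -> R) (sbar : R) :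
  0 <= R0 -> is_fSIR_solution R0 (fun _ => 0) s i ->
  (forall t, 0 < t -> 0 <= s t) -> (forall t, 0 < t -> i t <> 0) ->
  is_lim s p_infty sbar -> is_lim i p_infty 0 -> R0 * sbar <= 1.
Proof.
  intros HR0 [Hd _] Hs Hi Hls Hli.
  apply Rnot_lt_le. intros Hgt.
  assert (Heps : 0 < R0 * sbar - 1) by lra.
  destruct (proj2 (is_lim_spec _ _ _) (is_lim_scal_l s R0 p_infty sbar Hls)
              (mkposreal _ Heps)) as [M HM].
  assert (Hrate : forall t, Rmax M 0 < t -> 0 <= R0 / (1 + 0) * s t - 1).
  { intros t Ht. specialize (HM t (Rle_lt_trans _ _ _ (Rmax_l M 0) Ht)). simpl in HM.
    apply Rabs_def2 in HM. rewrite Rplus_0_r, Rdiv_1_r. lra. }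
  assert (Hmono := sqr_exp_nondecreasing i (fun t => R0 / (1 + 0) * s t - 1) 0 (Rmax M 0)
                     (fun t Ht => proj2 (Hd t (Rle_lt_trans _ _ _ (Rmax_r M 0) Ht)))
                     ltac:(intros t Ht; specialize (Hrate t Ht); lra)).
  assert (Hlim : is_lim (fun t => i t ^ 2 * exp (2 * 0 * t)) p_infty (0 * 0)).
  { apply (is_lim_ext (fun t => i t * i t)).
    - intros t. rewrite !Rmult_0_r, Rmult_0_l, exp_0. ring.
    - exact (is_lim_mult i i p_infty 0 0 Hli Hli I). }
  set (T := Rmax M 0 + 1).
  apply (Hi T); [pose proof (Rmax_r M 0); unfold T; lra|].
  assert (HT := le_lim_of_nondecreasing _ _ _ Hmono Hlim T ltac:(unfold T; lra)).
  cbv beta in HT. rewrite !Rmult_0_r, Rmult_0_l, exp_0, Rmult_1_r in HT.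
  nra.
Qed.

Theorem corollary1
  (R0 : R) (kappa : R -> R) (s0 i0 : R)
  (s i : R -> R) (sbar : R)
  (s' i' : R -> R) (sbar0 : R) :
  0 < R0 ->
  (forall x y, 0 <= x -> x <= y -> y <= 1 -> kappa x <= kappa y) ->
  (forall x, 0 <= x -> x <= 1 -> 0 <= kappa x) ->
  kappa 0 = 0 ->
  0 <= s0 -> 0 < i0 -> s0 + i0 = 1 ->
  s0 * R0 > 1 + kappa i0 ->
  (* the fSIR solution *)
  is_fSIR_solution R0 kappa s i ->
  s 0 = s0 -> i 0 = i0 ->
  (forall t, 0 <= t -> 0 <= s t /\ 0 <= i t) ->
  is_lim s p_infty sbar -> is_lim i p_infty 0 ->
  (* the classical SIR solution (kappa = 0), same initial data *)
  is_fSIR_solution R0 (fun _ => 0) s' i' ->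
  s' 0 = s0 -> i' 0 = i0 ->
  is_lim s' p_infty sbar0 -> is_lim i' p_infty 0 ->
  sbar >= sbar0.
Proof.
  intros HR0 _ Hk _ Hs0 Hi0 Hsum Hcond Hsol Es Ei Hpos Hls Hli Hsol' Es' Ei' Hls' Hli'.
  assert (Hs0pos : 0 < s0) by (pose proof (Hk i0 ltac:(lra) ltac:(lra)); nra).
  assert (Hfsir : sir_invariant R0 s0 i0 <= sir_invariant R0 sbar 0).
  { rewrite <- Es, <- Ei.
    apply (fSIR_invariant_le_final R0 kappa); auto; [lra|congruence|].
    intros t Ht. apply Hpos; lra. }
  assert (Hsir : sir_invariant R0 sbar0 0 = sir_invariant R0 s0 i0).
  { rewrite <- Es', <- Ei'. exact (sir_final_invariant R0 s' i' sbar0 Hsol' Hls' Hli'). }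
  assert (Hs'pos := sir_susceptible_pos R0 s' i' Hsol' ltac:(congruence)).
  assert (Hthreshold : R0 * sbar0 <= 1).
  { apply (sir_final_below_threshold R0 s' i'); auto; [lra| |].
    - intros t Ht. left. auto.
    - apply (sir_infected_neq0 R0 s' i'); [lra|exact Hsol'| |lra].
      intros t Ht. left. auto. }
  apply Rle_ge, Rnot_lt_le. intros Hlt.
  pose proof (sir_invariant_lt R0 sbar sbar0 HR0 Hlt Hthreshold). lra.
Qed.
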